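(* Let $n$ be odd, $k$ a positive integer with $\gcd(k,n)=1$, and $q=2^k$. For every $c\in\mathbb{F}_{2^n}$, the system $$\operatorname{Tr}\!\left(\frac{1}{v^{1/(q-1)}}\right)=1,\qquad (v+1)^{q+1}+cv=0$$ has at most one solution $v\in\mathbb{F}_{2^n}$.
   Context: $\operatorname{Tr}(x)=x+x^2+\cdots+x^{2^{n-1}}$ is the absolute trace from $\mathbb{F}_{2^n}$ to $\mathbb{F}_2$. Since $\gcd(q-1,2^n-1)=1$, the map $w\mapsto w^{q-1}$ is a bijection of $\mathbb{F}_{2^n}$, and $v^{1/(q-1)}$ denotes the unique $w\in\mathbb{F}_{2^n}$ with $w^{q-1}=v$. (A solution necessarily has $v\neq 0$, since $v=0$ does not satisfy the second equation.) *)

From HB Require Import structures.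
From mathcomp Require Import all_boot all_order all_algebra all_field.
Set Implicit Arguments. Unset Strict Implicit. Unset Printing Implicit Defensive.
Import GRing.Theory.
Local Open Scope ring_scope.

Definition absTr (F : finFieldType) (n : nat) (x : F) : F :=
  \sum_(i < n) x ^+ (2 ^ i)%N.

(* v^{1/(q-1)}: the (unique, when w |-> w^(q-1) is bijective) w with w^(q-1) = v;
   defaults to 0 if no such w exists (never happens under the paper's hypotheses). *)
Definition qroot (F : finFieldType) (q : nat) (v : F) : F :=
  odflt 0 [pick w : F | w ^+ (q - 1) == v].

(** If [x != y] are two solutions and [w ^+ (q - 1) = x], then subtracting the
    two equations forces [(x + 1)^q = x (y + 1) (x + y)^(q - 1)], and this is
    exactly the statement that [1/w = t^q + t] for [t = (x + 1) / ((x + y) w)].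
    Since [t |-> t^q] preserves the absolute trace, [Tr(t^q + t) = 0], so
    [Tr(1/w) = 1] can hold for at most one solution. Oddness of [n] and
    [coprime k n] only make [v^{1/(q-1)}] unique; the argument works for any
    [(q - 1)]-th root. *)
From HB Require Import structures.
From mathcomp Require Import all_boot all_order all_algebra all_field.
From mathcomp Require Import ring.
Set Implicit Arguments. Unset Strict Implicit. Unset Printing Implicit Defensive.
Import GRing.Theory.
Local Open Scope ring_scope.

Section CharacteristicTwo.
Variables (F : fieldType) (k : nat).
Hypothesis pcharF : (2 \in [pchar F])%N.

Lemma exprD_pchar2 (x y : F) : (x + y) ^+ (2 ^ k) = x ^+ (2 ^ k) + y ^+ (2 ^ k).
Proof. by apply: exprDn_pchar; rewrite pnatX pnatE ?pcharF. Qed.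

Lemma addr_eq0_pchar2 (x y : F) : (x + y == 0) = (x == y).
Proof. by rewrite addr_eq0 oppr_pchar2. Qed.

Lemma two_solutions_expr (c x y : F) :
    (x + 1) ^+ (2 ^ k).+1 + c * x = 0 -> (y + 1) ^+ (2 ^ k).+1 + c * y = 0 ->
    x != y ->
  (x + 1) ^+ (2 ^ k) = x * (y + 1) * (x + y) ^+ (2 ^ k - 1).
Proof.
move=> Ex Ey neq_xy.
have two0 : 2%:R = 0 :> F := pcharf0 pcharF.
have d_neq0 : x + y != 0 by rewrite addr_eq0_pchar2.
set a := (x + 1) ^+ (2 ^ k); set D := (x + y) ^+ (2 ^ k - 1).
have expd : (x + y) ^+ (2 ^ k) = (x + y) * D.
  by rewrite -exprS subn1 prednK ?expn_gt0.
have expy : (y + 1) ^+ (2 ^ k) = a + (x + y) * D.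
  rewrite -expd -exprD_pchar2; congr (_ ^+ _).
  by rewrite -[LHS]add0r -(addrr_pchar2 pcharF x); ring.
rewrite exprSr -/a in Ex; rewrite exprSr expy in Ey.
(* add the two equations and cancel [x + y] *)
have c_eq : c = a + D * (y + 1).
  apply/eqP; rewrite -subr_eq0 -(mulIr_eq0 _ (mulIf d_neq0)).
  apply/eqP; transitivity (a * (x + 1) + c * x + ((a + (x + y) * D) * (y + 1) + c * y)
                           - 2%:R * (a * (x + y + 1) + (x + y) * D * (y + 1))); first ring.
  by rewrite Ex Ey two0; ring.
apply/eqP; rewrite -subr_eq0; apply/eqP.
transitivity (a * (x + 1) + c * x - 2%:R * (a * x + x * (y + 1) * D)).
  by rewrite c_eq; ring.
by rewrite Ex two0; ring.
Qed.

Lemma inv_root_artin_schreier (c x y w : F) :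
    (x + 1) ^+ (2 ^ k).+1 + c * x = 0 -> (y + 1) ^+ (2 ^ k).+1 + c * y = 0 ->
    x != y -> w ^+ (2 ^ k - 1) = x ->
  exists t, w^-1 = t ^+ (2 ^ k) + t.
Proof.
move=> Ex Ey neq_xy wx; exists ((x + 1) / ((x + y) * w)).
have [->|w_neq0] := eqVneq w 0.
  by rewrite !(mulr0, invr0) expr0n expn_eq0 addr0.
have two0 : 2%:R = 0 :> F := pcharf0 pcharF.
have d_neq0 : x + y != 0 by rewrite addr_eq0_pchar2.
have x_neq0 : x != 0 by rewrite -wx expf_neq0.
have expw : w ^+ (2 ^ k) = w * x by rewrite -wx -exprS subn1 prednK ?expn_gt0.
have expd : (x + y) ^+ (2 ^ k) = (x + y) * (x + y) ^+ (2 ^ k - 1).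
  by rewrite -exprS subn1 prednK ?expn_gt0.
rewrite expr_div_n exprMn (two_solutions_expr Ex Ey neq_xy) expw expd.
rewrite -[w^-1]addr0 -(mul0r ((x + y) * w)^-1) -two0; field.
by rewrite w_neq0 x_neq0 d_neq0 expf_neq0.
Qed.

End CharacteristicTwo.

Section AbsoluteTrace.
Variables (F : finFieldType) (n : nat).
Hypothesis cardF : #|F| = (2 ^ n)%N.

Lemma pchar2_finField : (2 \in [pchar F])%N.
Proof. exact: card_finPcharP cardF _. Qed.

Lemma absTr0 : absTr n (0 : F) = 0.
Proof. by rewrite /absTr big1 // => i _; rewrite expr0n expn_eq0. Qed.

Lemma absTrD (x y : F) : absTr n (x + y) = absTr n x + absTr n y.
Proof.
rewrite /absTr -big_split /=; apply: eq_bigr => i _.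
by rewrite (exprD_pchar2 _ pchar2_finField).
Qed.

Lemma absTr_sqr (x : F) : absTr n (x ^+ 2) = absTr n x.
Proof.
have n_gt0 : (0 < n)%N.
  by rewrite lt0n; apply: contraTneq (card_finNzRing_gt1 F) => n0; rewrite cardF n0.
rewrite /absTr -(prednK n_gt0) big_ord_recr big_ord_recl /= expn0 expr1.
rewrite -exprM -expnS prednK // -cardF expf_card addrC; congr (_ + _).
by apply: eq_bigr => i _; rewrite -exprM /bump /= add1n expnS.
Qed.

Lemma absTr_expr2n (k : nat) (x : F) : absTr n (x ^+ (2 ^ k)) = absTr n x.
Proof.
elim: k => [|k IHk]; first by rewrite expn0 expr1.
by rewrite expnSr exprM absTr_sqr IHk.
Qed.

Lemma absTr_artin_schreier (k : nat) (t : F) : absTr n (t ^+ (2 ^ k) + t) = 0.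
Proof. by rewrite absTrD absTr_expr2n addrr_pchar2 // pchar2_finField. Qed.

End AbsoluteTrace.

Lemma qroot_spec (F : finFieldType) (q : nat) (v : F) :
  qroot q v != 0 -> qroot q v ^+ (q - 1) = v.
Proof. by rewrite /qroot; case: pickP => [w /eqP|] //=; rewrite eqxx. Qed.

Theorem mainTheorem2 (F : finFieldType) (n k q : nat)
  (hF : #|F| = (2 ^ n)%N) (hn : odd n) (hk : (0 < k)%N) (hkn : coprime k n)
  (hq : q = (2 ^ k)%N) (c : F) :
  forall v1 v2 : F,
    absTr n ((qroot q v1)^-1) = 1 -> (v1 + 1) ^+ q.+1 + c * v1 = 0 ->
    absTr n ((qroot q v2)^-1) = 1 -> (v2 + 1) ^+ q.+1 + c * v2 = 0 ->
    v1 = v2.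
Proof.
subst q => v1 v2 Tr1 E1 _ E2; have [//|neq12] := eqVneq v1 v2.
have w_neq0 : qroot (2 ^ k) v1 != 0.
  by apply: contra_eq_neq Tr1 => ->; rewrite invr0 absTr0 eq_sym oner_eq0.
have [t w_inv] := inv_root_artin_schreier (pchar2_finField hF) E1 E2 neq12 (qroot_spec w_neq0).
by move: Tr1; rewrite w_inv absTr_artin_schreier // => /eqP; rewrite eq_sym oner_eq0.
Qed.
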